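(* Let $\beta\ne0$, and consider the episodic MDP with finite state and action spaces, a tabular stochastic policy $\pi_\theta$, soft value functions $V^\beta_{\pi_\theta},Q^\beta_{\pi_\theta}$ and behavior state weights $\rho_b$ as in the context. Define $$g(\pi_\theta)=\frac1\beta\sum_{s\in\mathcal S}\rho_b(s)\sum_{a\in\mathcal A}\nabla_\theta\pi_\theta(a|s)\,e^{\beta Q^\beta_{\pi_\theta}(s,a)},$$ where $Q^\beta_{\pi_\theta}$ is held fixed (not differentiated), and let $\theta'=\theta+\alpha\,g(\pi_\theta)$. Then there exists $\epsilon>0$ such that for all $0<\alpha<\epsilon$, $$V^\beta_{\pi_\theta}(s)\le V^\beta_{\pi_{\theta'}}(s)\qquad\text{for all }s\in\mathcal S.$$
   Context: Episodic MDP: finite state space $\mathcal S$, finite action space $\mathcal A$, transition probabilities $p(s'|s,a)$, reward $r(s,a)$. There is a set $\mathcal S_{\rm term}\subset\mathcal S$ of absorbing terminal states with $r(s,a)=0$ and $p(\mathcal S_{\rm term}|s,a)=1$ for $s\in\mathcal S_{\rm term}$, and an integer $T$ such that from any state, under any sequence of actions, the state lies in $\mathcal S_{\rm term}$ after at most $T$ transitions with probability 1. Tabular stochastic policy: $\theta=(\theta_s)_{s\in\mathcal S}$, and for each $s$ the distribution $\pi_\theta(\cdot|s)$ on $\mathcal A$ depends only on the block $\theta_s$, continuously differentiably (e.g. softmax $\pi_\theta(a|s)=e^{\theta_{s,a}}/\sum_{a'}e^{\theta_{s,a'}}$). Soft value functions: $V^\beta_\pi(s)=\frac1\beta\log\mathbb{E}_\pi\big[e^{\beta\sum_{t\ge1}r_t}\mid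 s_1=s\big]$, $Q^\beta_\pi(s,a)=\frac1\beta\log\mathbb{E}_\pi\big[e^{\beta\sum_{t\ge1}r_t}\mid s_1=s,a_1=a\big]$; they satisfy $V^\beta_\pi(s)=\frac1\beta\log\sum_a\pi(a|s)e^{\beta Q^\beta_\pi(s,a)}$ and $Q^\beta_\pi(s,a)=r(s,a)+\frac1\beta\log\sum_{s'}p(s'|s,a)e^{\beta V^\beta_\pi(s')}$. $\rho_b:\mathcal S\to[0,\infty)$ is the state distribution of an arbitrary behavior policy (any nonnegative weights). *)

From HB Require Import structures.
From mathcomp Require Import all_boot all_order all_algebra.
From mathcomp Require Import all_classical all_reals all_analysis.
Set Implicit Arguments. Unset Strict Implicit. Unset Printing Implicit Defensive.
Import Order.TTheory GRing.Theory Num.Theory.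
Import numFieldNormedType.Exports.
Local Open Scope ring_scope.

Definition partial (R : realType) (n : nat) (f : 'rV[R]_n -> R)
  (x : 'rV[R]_n) (i : 'I_n) : R := 'D_(delta_mx 0 i) f x.

Definition grad (R : realType) (n : nat) (f : 'rV[R]_n -> R) (x : 'rV[R]_n)
  : 'rV[R]_n := \row_i partial f x i.

Definition C1 (R : realType) (n : nat) (f : 'rV[R]_n -> R) : Prop :=
  (forall x, differentiable f x) /\ (forall i, continuous (fun x => partial f x i)).

(* expU n s = E_pol[ exp(beta * sum_{t=1}^n r_t) | s_1 = s ]  (expectation over the
   length-n trajectory, computed by the tower property) *)
Fixpoint expU (R : realType) (S A : finType) (beta : R) (p : S -> A -> S -> R)
  (r : S -> A -> R) (pol : S -> A -> R) (n : nat) (s : S) : R :=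
  match n with
  | 0 => 1
  | n'.+1 => \sum_(a : A) pol s a *
      (expR (beta * r s a) * \sum_(s' : S) p s a s' * expU beta p r pol n' s')
  end.

(* soft value V^beta_pol(s) = 1/beta log E[e^{beta sum_{t>=1} r_t} | s_1 = s];
   all rewards after T transitions are 0, so the horizon-T expectation is the full one *)
Definition Vsoft (R : realType) (S A : finType) (beta : R) (p : S -> A -> S -> R)
  (r : S -> A -> R) (T : nat) (pol : S -> A -> R) (s : S) : R :=
  beta^-1 * ln (expU beta p r pol T s).

Definition Qsoft (R : realType) (S A : finType) (beta : R) (p : S -> A -> S -> R)
  (r : S -> A -> R) (T : nat) (pol : S -> A -> R) (s : S) (a : A) : R :=
  beta^-1 * ln (expR (beta * r s a) *
                \sum_(s' : S) p s a s' * expU beta p r pol T.-1 s').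

Definition policy_of (R : realType) (S A : finType) (d : S -> nat)
  (pi : forall s : S, 'rV[R]_(d s) -> A -> R) (theta : forall s : S, 'rV[R]_(d s))
  : S -> A -> R := fun s a => pi s (theta s) a.

(* block s of g(pi_theta) = 1/beta sum_s' rho(s') sum_a grad_theta pi_theta(a|s') e^{beta Q(s',a)};
   since pi_theta(.|s') depends only on theta_{s'}, only s' = s contributes to block s;
   Q is held fixed (not differentiated). *)
Definition soft_pg_block (R : realType) (S A : finType) (d : S -> nat)
  (pi : forall s : S, 'rV[R]_(d s) -> A -> R) (beta : R) (p : S -> A -> S -> R)
  (r : S -> A -> R) (T : nat) (rho : S -> R) (theta : forall s : S, 'rV[R]_(d s))
  (s : S) : 'rV[R]_(d s) :=
  beta^-1 *: (rho s *: \sum_(a : A)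
     (expR (beta * Qsoft beta p r T (policy_of pi theta) s a) *:
       grad (fun x => pi s x a) (theta s))).

Definition pg_update (R : realType) (S A : finType) (d : S -> nat)
  (pi : forall s : S, 'rV[R]_(d s) -> A -> R) (beta : R) (p : S -> A -> S -> R)
  (r : S -> A -> R) (T : nat) (rho : S -> R) (theta : forall s : S, 'rV[R]_(d s))
  (alpha : R) : forall s : S, 'rV[R]_(d s) :=
  fun s => theta s + alpha *: soft_pg_block pi beta p r T rho theta s.

From HB Require Import structures.
From mathcomp Require Import all_boot all_order all_algebra.
From mathcomp Require Import all_classical all_reals all_analysis.
From mathcomp Require Import ring.
Set Implicit Arguments. Unset Strict Implicit. Unset Printing Implicit Defensive.
Import Order.TTheory GRing.Theory Num.Theory.
Import numFieldNormedType.Exports.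
Local Open Scope ring_scope.
Local Open Scope classical_set_scope.

(* Let W = e^{beta V^pi} and B_pi' f (s) = sum_a pi'(a|s) e^{beta r(s,a)} sum_s' p(s'|s,a) f(s')
   be the soft Bellman operator.  Since every trajectory is absorbed within T steps and
   terminal states are reward-free with W = 1 there, B_pi W = W and
   B_pi' W (s) = sum_a pi'(a|s) e^{beta Q^pi(s,a)}.  Along theta + alpha g the latter has
   alpha-derivative rho(s)/beta * |sum_a e^{beta Q} grad pi(a|s)|^2 at alpha = 0, so for small
   alpha > 0 it moves in the direction of sign beta: beta^-1 (B_pi' W - W) >= 0.  B_pi' is
   monotone, so this persists through T iterations, and B_pi'^T W = e^{beta V^pi'}; applying
   beta^-1 ln gives V^pi <= V^pi'. *)

Section GradientStep.
Context {R : realType}.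

Lemma derive_gt0_near (V : normedModType R) (F : V -> R) (x v : V) :
  derivable F x v -> 0 < 'D_v F x ->
  \forall t \near 0^', 0 < t -> F x < F (x + t *: v).
Proof.
move=> dF DFpos; near=> t => t_gt0.
have : 0 < t^-1 *: ((F \o shift x) (t *: v) - F x).
  by near: t; exact: (cvgr_gt _ dF _ DFpos).
by rewrite /= pmulr_rgt0 ?invr_gt0 // subr_gt0 addrC.
Unshelve. all: by end_near.
Qed.

Lemma derive_rV_partial (n : nat) (F : 'rV[R]_n -> R) (x v : 'rV[R]_n) :
  differentiable F x -> 'D_v F x = \sum_i v 0 i * partial F x i.
Proof.
move=> dF; rewrite deriveE // {1}(row_sum_delta v) linear_sum.
by apply: eq_bigr => i _; rewrite linearZ /= /partial deriveE.
Qed.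

Lemma sum_sqr_rV_gt0 (n : nat) (v : 'rV[R]_n) : v != 0 -> 0 < \sum_i v 0 i ^+ 2.
Proof.
move=> v_neq0; rewrite lt_def sumr_ge0 ?andbT => [|i _]; last exact: sqr_ge0.
apply: contraNneq v_neq0 => /psumr_eq0P v_sqr0; apply/eqP/rowP => i.
by rewrite mxE; apply/eqP; rewrite -sqrf_eq0 v_sqr0 // => j _; rewrite sqr_ge0.
Qed.

Lemma grad_step_ge (n : nat) (F : 'rV[R]_n -> R) (x : 'rV[R]_n) (k : R) :
  differentiable F x ->
  \forall t \near 0^', 0 < t -> 0 <= k * (F (x + t *: (k *: grad F x)) - F x).
Proof.
move=> dF; set v := k *: grad F x.
have [->|v_neq0] := eqVneq v 0.
  by near=> t => _; rewrite scaler0 addr0 subrr mulr0.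
have dkF : derivable (k \*: F) x v by apply/derivableZ/diff_derivable.
have DkF_gt0 : 0 < 'D_v (k \*: F) x.
  rewrite deriveZ ?derive_rV_partial // ?scaler_sumr; last exact: diff_derivable.
  rewrite (eq_bigr (fun i => v 0 i ^+ 2)) ?sum_sqr_rV_gt0 // => i _.
  by rewrite /v !mxE -[k *: _]/(k * _); ring.
near=> t => t_gt0.
have : (k \*: F) x < (k \*: F) (x + t *: v).
  by move: t_gt0; near: t; exact: derive_gt0_near.
by rewrite /= -subr_gt0 -mulrBr => /ltW.
Unshelve. all: by end_near.
Qed.

Lemma lincomb_grad_step_ge (I : finType) (n : nat) (c : I -> R)
    (f : I -> 'rV[R]_n -> R) (x : 'rV[R]_n) (k rho : R) :
  0 <= rho -> (forall i, differentiable (f i) x) ->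
  \forall t \near 0^', 0 < t ->
    0 <= k * (\sum_i c i * f i (x + t *: (k *: (rho *: \sum_i c i *: grad (f i) x)))
              - \sum_i c i * f i x).
Proof.
move=> rho_ge0 df; set F := \sum_i c i *: f i.
have FE y : F y = \sum_i c i * f i y by rewrite /F fct_sumE.
have dF : differentiable F x.
  apply: (big_ind (fun g => differentiable g x)) => [|g h dg dh|i _].
  - exact: differentiable_cst.
  - exact: differentiableD.
  - exact: differentiableZ.
have gradF : grad F x = \sum_i c i *: grad (f i) x.
  apply/rowP => j; rewrite !mxE summxE /partial.
  under [RHS]eq_bigr do rewrite !mxE /partial.
  have : is_derive x (delta_mx 0 j) F (\sum_i c i *: 'D_(delta_mx 0 j) (f i) x).
    apply: (big_ind2 (fun g dg => is_derive x (delta_mx 0 j) g dg)) => [|g u h w|i _].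
    - exact: is_derive_cst.
    - exact: is_deriveD.
    - by apply: is_deriveZ; apply/derivableP/diff_derivable.
  by move=> DF; rewrite derive_val.
have [<-|rho_gt0] := eqVneq 0 rho.
  by near=> t => _; rewrite scale0r !scaler0 addr0 subrr mulr0.
near=> t => t_gt0.
rewrite -!FE -gradF scalerA.
have : 0 <= (k * rho) * (F (x + t *: ((k * rho) *: grad F x)) - F x).
  by move: t_gt0; near: t; exact: grad_step_ge.
rewrite [k * rho]mulrC scalerA -mulrA pmulr_rge0 //.
by rewrite lt_def eq_sym rho_gt0.
Unshelve. all: by end_near.
Qed.
End GradientStep.

Lemma postfix_le_iter (T : Type) (le : T -> T -> Prop) (B : T -> T) (x : T) (n : nat) :
  (forall y, le y y) -> (forall y z w, le y z -> le z w -> le y w) ->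
  (forall y z, le y z -> le (B y) (B z)) ->
  le x (B x) -> le x (iter n B x).
Proof.
move=> le_refl le_trans B_mono x_le_Bx; elim: n => [|n IH] //=.
exact: le_trans x_le_Bx (B_mono _ _ IH).
Qed.

Lemma convex_comb_gt0 (R : numDomainType) (I : finType) (w u : I -> R) :
  (forall i, 0 <= w i) -> \sum_i w i = 1 -> (forall i, 0 < u i) ->
  0 < \sum_i w i * u i.
Proof.
move=> w_ge0 w_sum1 u_gt0; rewrite lt_def sumr_ge0 ?andbT => [|i _]; last first.
  by rewrite mulr_ge0 // ltW.
apply/negP => /eqP/psumr_eq0P wu0.
have wu_ge0 j : true -> 0 <= w j * u j by move=> _; rewrite mulr_ge0 // ltW.
suff : \sum_i w i = 0 by rewrite w_sum1 => /eqP; rewrite oner_eq0.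
apply: big1 => i _; apply/eqP; have /eqP := wu0 wu_ge0 i isT.
by rewrite mulf_eq0 (gt_eqF (u_gt0 i)) orbF.
Qed.

Lemma le_scaled_ln (R : realType) (k x y : R) :
  0 < x -> 0 < y -> 0 <= k * (y - x) -> k * ln x <= k * ln y.
Proof.
move=> x_gt0 y_gt0; have [k_lt0|k_gt0|->] := ltgtP k 0; last by rewrite !mul0r.
- rewrite nmulr_rge0 // subr_le0 => le_yx.
  by apply: ler_wnM2l; [exact: ltW|rewrite ler_ln ?posrE].
- rewrite pmulr_rge0 // subr_ge0 => le_xy.
  by apply: ler_wpM2l; [exact: ltW|rewrite ler_ln ?posrE].
Qed.

Section SoftBellman.
Context {R : realType} {S A : finType}.
Variables (beta : R) (p : S -> A -> S -> R) (r : S -> A -> R).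
Hypothesis p_ge0 : forall s a s', 0 <= p s a s'.
Hypothesis p_sum1 : forall s a, \sum_s' p s a s' = 1.

Definition soft_bellman (pol : S -> A -> R) (f : S -> R) (s : S) : R :=
  \sum_a pol s a * (expR (beta * r s a) * \sum_s' p s a s' * f s').

Lemma expU_iter (pol : S -> A -> R) (n : nat) :
  expU beta p r pol n = iter n (soft_bellman pol) (fun=> 1).
Proof. by elim: n => // n IH; apply/funext => s /=; rewrite -IH. Qed.

Lemma soft_bellman_eq (pol : S -> A -> R) (f g : S -> R) (s : S) :
  (forall a s', 0 < p s a s' -> f s' = g s') ->
  soft_bellman pol f s = soft_bellman pol g s.
Proof.
move=> fg; apply: eq_bigr => a _; congr (_ * (_ * _)); apply: eq_bigr => s' _.
have [->|p_neq0] := eqVneq (p s a s') 0; first by rewrite !mul0r.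
by rewrite (fg a) // lt_def p_neq0 p_ge0.
Qed.

Lemma soft_bellman_le (pol : S -> A -> R) (f g : S -> R) (s : S) :
  (forall a, 0 <= pol s a) -> (forall s', f s' <= g s') ->
  soft_bellman pol f s <= soft_bellman pol g s.
Proof.
move=> pol_ge0 fg; apply: ler_sum => a _; rewrite ler_wpM2l // ler_wpM2l ?expR_ge0 //.
by apply: ler_sum => s' _; rewrite ler_wpM2l.
Qed.

Section Policy.
Variable pol : S -> A -> R.
Hypothesis pol_ge0 : forall s a, 0 <= pol s a.
Hypothesis pol_sum1 : forall s, \sum_a pol s a = 1.

Lemma soft_bellman_gt0 (f : S -> R) (s : S) :
  (forall s', 0 < f s') -> 0 < soft_bellman pol f s.
Proof.
move=> f_gt0; apply: convex_comb_gt0 => // a.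
by rewrite mulr_gt0 ?expR_gt0 ?convex_comb_gt0.
Qed.

Lemma expU_gt0 (n : nat) (s : S) : 0 < expU beta p r pol n s.
Proof. by elim: n s => // n IH s; apply: soft_bellman_gt0. Qed.

Lemma iter_soft_bellman_sign (k : R) (f : S -> R) (n : nat) (s : S) :
  (forall s', 0 <= k * (soft_bellman pol f s' - f s')) ->
  0 <= k * (iter n (soft_bellman pol) f s - f s).
Proof.
pose le_pw (f1 f2 : S -> R) := forall s', f1 s' <= f2 s'.
have le_pw_trans f1 f2 f3 : le_pw f1 f2 -> le_pw f2 f3 -> le_pw f1 f3.
  by move=> f12 f23 s'; exact: le_trans (f12 s') (f23 s').
have B_mono f1 f2 : le_pw f1 f2 -> le_pw (soft_bellman pol f1) (soft_bellman pol f2).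
  by move=> f12 s'; exact: soft_bellman_le.
have [k_lt0|k_gt0|->] := ltgtP k 0 => Bf; last by rewrite mul0r.
- suff : le_pw (iter n (soft_bellman pol) f) f.
    by move/(_ s); rewrite nmulr_rge0 // subr_le0.
  apply: (@postfix_le_iter _ (fun f1 f2 => le_pw f2 f1)) => [f1 s'|f1 f2 f3|f1 f2|s'].
  + exact: lexx.
  + by move=> f21 f32; exact: le_pw_trans f32 f21.
  + exact: B_mono.
  + by have := Bf s'; rewrite nmulr_rge0 // subr_le0.
- suff : le_pw f (iter n (soft_bellman pol) f).
    by move/(_ s); rewrite pmulr_rge0 // subr_ge0.
  apply: (@postfix_le_iter _ le_pw) => [f1 s'|f1 f2 f3|f1 f2|s'].
  + exact: lexx.
  + exact: le_pw_trans.
  + exact: B_mono.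
  + by have := Bf s'; rewrite pmulr_rge0 // subr_ge0.
Qed.

End Policy.

Variable Sterm : {set S}.
Hypothesis r_term : forall s a, s \in Sterm -> r s a = 0.
Hypothesis p_term : forall s a, s \in Sterm -> \sum_(s' in Sterm) p s a s' = 1.

Definition absorbing_paths (n : nat) (s : S) : Prop :=
  forall (ss : nat -> S) (aa : nat -> A), ss 0%N = s ->
    (forall t, (t < n)%N -> 0 < p (ss t) (aa t) (ss t.+1)) -> ss n \in Sterm.

Fixpoint absorbed (n : nat) (s : S) : Prop :=
  if n is n'.+1 then forall a s', 0 < p s a s' -> absorbed n' s' else s \in Sterm.

Lemma absorbing_paths_succ (n : nat) (s : S) (a : A) (s' : S) :
  absorbing_paths n.+1 s -> 0 < p s a s' -> absorbing_paths n s'.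
Proof.
move=> paths_s p_gt0 ss aa ss0 ss_path.
pose ss' t := if t is t'.+1 then ss t' else s.
pose aa' t := if t is t'.+1 then aa t' else a.
by apply: (paths_s ss' aa') => // -[|t] /=; [rewrite ss0 | exact: ss_path].
Qed.

Lemma absorbed_of_paths (n : nat) (s : S) :
  absorbing_paths n.+1 s -> absorbed n.+1 s.
Proof.
elim: n s => [|n IH] s paths_s a s' p_gt0 /=.
  by apply: (absorbing_paths_succ paths_s p_gt0 (ss := fun=> s') (aa := fun=> a)).
exact/IH/(absorbing_paths_succ paths_s p_gt0).
Qed.

Lemma terminal_closed (s : S) (a : A) (s' : S) :
  s \in Sterm -> 0 < p s a s' -> s' \in Sterm.
Proof.
move=> s_term p_gt0; apply/negPn/negP => s'_nterm.
have := p_sum1 s a; rewrite (bigID (mem Sterm)) /= p_term // => /eqP.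
rewrite -subr_eq0 addrAC subrr add0r => /eqP/psumr_eq0P p_out0.
by move: p_gt0; rewrite p_out0 ?ltxx // => x _; exact: p_ge0.
Qed.

Lemma soft_bellman_terminal (pol : S -> A -> R) (f : S -> R) (s : S) :
  \sum_a pol s a = 1 -> s \in Sterm -> {in Sterm, forall s', f s' = 1} ->
  soft_bellman pol f s = 1.
Proof.
move=> pol_sum1 s_term f1; rewrite -[RHS]pol_sum1; apply: eq_bigr => a _.
rewrite r_term // mulr0 expR0 mul1r -[RHS]mulr1 -(p_sum1 s a); congr (_ * _).
apply: eq_bigr => s' _; have [->|p_neq0] := eqVneq (p s a s') 0; first by rewrite !mul0r.
rewrite f1 ?mulr1 //; apply: (terminal_closed (a := a) s_term).
by rewrite lt_def p_neq0 p_ge0.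
Qed.

Lemma expU_terminal (pol : S -> A -> R) (n : nat) (s : S) :
  (forall s, \sum_a pol s a = 1) -> s \in Sterm -> expU beta p r pol n s = 1.
Proof.
move=> pol_sum1; elim: n s => // n IH s s_term.
by apply: soft_bellman_terminal => // s' /IH.
Qed.

Lemma iter_soft_bellman_absorbed (pol : S -> A -> R) (n : nat) (f g : S -> R) (s : S) :
  absorbed n s -> {in Sterm, f =1 g} ->
  iter n (soft_bellman pol) f s = iter n (soft_bellman pol) g s.
Proof.
move=> + fg; elim: n s => [|n IH] s /=; first exact: fg.
by move=> abs_s; apply: soft_bellman_eq => a s' /abs_s /IH.
Qed.

Lemma expU_succ_absorbed (pol : S -> A -> R) (n : nat) (s : S) :
  (forall s, \sum_a pol s a = 1) -> absorbed n s ->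
  expU beta p r pol n.+1 s = expU beta p r pol n s.
Proof.
move=> pol_sum1 abs_s; rewrite !expU_iter iterSr.
apply: iter_soft_bellman_absorbed => // s' s'_term.
exact: soft_bellman_terminal.
Qed.

Section SoftQ.
Variables (pol : S -> A -> R) (T : nat).
Hypothesis pol_ge0 : forall s a, 0 <= pol s a.
Hypothesis pol_sum1 : forall s, \sum_a pol s a = 1.
Hypothesis beta_neq0 : beta != 0.

Lemma expR_Qsoft (s : S) (a : A) : absorbed T s ->
  expR (beta * Qsoft beta p r T pol s a) =
  expR (beta * r s a) * \sum_s' p s a s' * expU beta p r pol T s'.
Proof.
move=> abs_s; rewrite /Qsoft mulVKf // lnK; last first.
  by rewrite posrE mulr_gt0 ?expR_gt0 // convex_comb_gt0 // => s'; exact: expU_gt0.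
congr (_ * _); case: T abs_s => [|n] //= abs_s; apply: eq_bigr => s' _.
have [->|p_neq0] := eqVneq (p s a s') 0; first by rewrite !mul0r.
rewrite -expU_succ_absorbed //; apply: (abs_s a).
by rewrite lt_def p_neq0 p_ge0.
Qed.

Lemma soft_bellman_Qsoft (pol' : S -> A -> R) (s : S) : absorbed T s ->
  soft_bellman pol' (expU beta p r pol T) s =
  \sum_a pol' s a * expR (beta * Qsoft beta p r T pol s a).
Proof. by move=> abs_s; apply: eq_bigr => a _; rewrite expR_Qsoft. Qed.

End SoftQ.

Lemma soft_policy_improvement (pol pol' : S -> A -> R) (T : nat) :
  (forall s a, 0 <= pol s a) -> (forall s, \sum_a pol s a = 1) ->
  (forall s a, 0 <= pol' s a) -> (forall s, \sum_a pol' s a = 1) ->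
  beta != 0 -> (forall s, absorbed T s) ->
  (forall s, 0 <= beta^-1 * (\sum_a pol' s a * expR (beta * Qsoft beta p r T pol s a)
                             - \sum_a pol s a * expR (beta * Qsoft beta p r T pol s a))) ->
  forall s, Vsoft beta p r T pol s <= Vsoft beta p r T pol' s.
Proof.
move=> pol_ge0 pol_sum1 pol'_ge0 pol'_sum1 beta_neq0 abs improve s.
set W := expU beta p r pol T.
have W_fix s' : soft_bellman pol W s' = W s' := expU_succ_absorbed pol_sum1 (abs s').
have expU'E : expU beta p r pol' T s = iter T (soft_bellman pol') W s.
  rewrite expU_iter; apply: iter_soft_bellman_absorbed => // s' s'_term.
  by rewrite /W expU_terminal.
apply: le_scaled_ln; [exact: expU_gt0 | exact: expU_gt0 |].
rewrite expU'E; apply: iter_soft_bellman_sign => // s'.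
by rewrite -[W s']W_fix !soft_bellman_Qsoft.
Qed.

End SoftBellman.

Lemma dnbhs0_right_interval (R : realType) (P : R -> Prop) :
  (\forall t \near 0^', P t) -> exists2 e : R, 0 < e & forall t, 0 < t -> t < e -> P t.
Proof.
move=> /nbhs_ballP[e /= e_gt0 Pe]; exists e => // t t_gt0 t_lt_e.
by apply: Pe; [rewrite /ball /= sub0r normrN gtr0_norm | rewrite gt_eqF].
Qed.

Theorem theorem3p4 (R : realType) (S A : finType) (p : S -> A -> S -> R)
  (r : S -> A -> R) (Sterm : {set S}) (T : nat) (d : S -> nat)
  (pi : forall s : S, 'rV[R]_(d s) -> A -> R) (rho : S -> R) (beta : R)
  (theta : forall s : S, 'rV[R]_(d s)) :
  (forall s a s', 0 <= p s a s') ->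
  (forall s a, \sum_(s' : S) p s a s' = 1) ->
  (forall s a, s \in Sterm -> r s a = 0) ->
  (forall s a, s \in Sterm -> \sum_(s' in Sterm) p s a s' = 1) ->
  (forall (ss : nat -> S) (aa : nat -> A),
      (forall t : nat, (t < T)%N -> 0 < p (ss t) (aa t) (ss t.+1)) ->
      ss T \in Sterm) ->
  (forall s x a, 0 <= pi s x a) ->
  (forall s x, \sum_(a : A) pi s x a = 1) ->
  (forall s a, C1 (fun x => pi s x a)) ->
  (forall s, 0 <= rho s) ->
  beta != 0 ->
  exists eps : R, 0 < eps /\
    forall alpha : R, 0 < alpha -> alpha < eps ->
      forall s : S,
        Vsoft beta p r T (policy_of pi theta) s <=
        Vsoft beta p r T (policy_of pi (pg_update pi beta p r T rho theta alpha)) s.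
Proof.
move=> p_ge0 p_sum1 r_term p_term paths pi_ge0 pi_sum1 pi_C1 rho_ge0 beta_neq0.
case: T paths => [|n] paths; first by exists 1; split => // alpha _ _ s.
have abs s : absorbed p Sterm n.+1 s.
  by apply: absorbed_of_paths => ss aa _; exact: paths.
set Q := Qsoft beta p r n.+1 (policy_of pi theta).
have ascent s : \forall t \near 0^', 0 < t ->
    0 <= beta^-1 * (\sum_a expR (beta * Q s a) *
                      pi s (theta s + t *: soft_pg_block pi beta p r n.+1 rho theta s) a
                    - \sum_a expR (beta * Q s a) * pi s (theta s) a).
  exact: lincomb_grad_step_ge _ _ (rho_ge0 s) (fun a => (pi_C1 s a).1 (theta s)).
have [eps eps_gt0 small_step] := dnbhs0_right_interval (filter_forall _ ascent).
exists eps; split => // alpha alpha_gt0 alpha_lt_eps.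
have pol_ge0 th s a : 0 <= policy_of pi th s a := pi_ge0 s (th s) a.
have pol_sum1 th s : \sum_a policy_of pi th s a = 1 := pi_sum1 s (th s).
apply: (soft_policy_improvement p_ge0 p_sum1 r_term p_term
  (pol_ge0 _) (pol_sum1 _) (pol_ge0 _) (pol_sum1 _) beta_neq0 abs) => s.
rewrite /policy_of /pg_update; under eq_bigr do rewrite mulrC.
under [X in _ - X]eq_bigr do rewrite mulrC.
exact: small_step.
Qed.
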